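(* Let $\mathcal{A}$ be a finite set of alternatives, $N\ge2$, $i\in\{1,\dots,N\}$, and $w:\underline{\mathcal{P}}^N\to\underline{\mathcal{P}}$. Then (the restriction to $\mathcal{P}^N$ of) $w$ has a dictator at individual $i$ if and only if for every $p\in\mathcal{P}^N$: $+_i(p,w(p))=p$.
   Context: $\mathcal{P}$ is the set of weak orders on $\mathcal{A}$; $\underline{\mathcal{P}}=\mathcal{P}\cup\{\mathbf{c}\}$ with a new element $\mathbf{c}$; $\mathcal{P}^N$ and $\underline{\mathcal{P}}^N$ are the sets of $N$-tuples (profiles) over $\mathcal{P}$ and $\underline{\mathcal{P}}$. Strictness order: for weak orders, $r\le s$ iff every strict preference of $s$ is a strict preference of $r$; $\mathbf{c}$ is added as bottom element; $\mathbf{i}$ (total indifference) is the top. $\vee$ is least upper bound. $r+s=r\vee s$ if $r,s\in\mathcal{P}$, and $r+s=\mathbf{i}$ if $r=\mathbf{c}$ or $s=\mathbf{c}$. The map $+_i:\underline{\mathcal{P}}^N\times\underline{\mathcal{P}}\to\underline{\mathcal{P}}^N$ is $+_i((p_1,\dots,p_i,\dots,p_N),r)=(p_1,\dots,p_i+r,\dots,p_N)$. $w$ has a dictator at $i$ if for all $p\in\mathcal{P}^N$: (1) $w(p)=\mathbf{c}$ implies $p_i=\mathbf{i}$; (2) $p_i\ne\mathbf{i}$ implies $w(p)\le p_i$. *)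

From mathcomp Require Import all_boot.
From Stdlib Require Import ClassicalEpsilon.
Set Implicit Arguments. Unset Strict Implicit. Unset Printing Implicit Defensive.

Record weak_order (A : finType) := WeakOrder {
  wo_rel :> rel A;
  wo_total : total wo_rel;
  wo_trans : transitive wo_rel }.

Section WeakOrders.
Variable A : finType.

Definition strict (r : weak_order A) (a b : A) : bool := r a b && ~~ r b a.

Definition wo_le (r s : weak_order A) : Prop :=
  forall a b, strict s a b -> strict r a b.

Definition indiff : weak_order A :=
  @WeakOrder A (fun _ _ => true) (fun _ _ => erefl true) (fun _ _ _ _ _ => erefl true).

Definition is_lub (r s t : weak_order A) : Prop :=
  wo_le r t /\ wo_le s t /\ (forall u, wo_le r u -> wo_le s u -> wo_le t u).

(* r \/ s : the least upper bound (chosen by Hilbert epsilon; it exists) *)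
Definition wo_join (r s : weak_order A) : weak_order A :=
  epsilon (inhabits indiff) (is_lub r s).

(* underline-P = P u {c}, encoded as option (weak_order A), c := None *)
Definition uP := option (weak_order A).
Definition cbot : uP := None.

Definition uP_le (x y : uP) : Prop :=
  match x, y with
  | None, _ => True
  | Some _, None => False
  | Some r, Some s => wo_le r s
  end.

Definition uP_add (x y : uP) : uP :=
  match x, y with
  | Some r, Some s => Some (wo_join r s)
  | _, _ => Some indiff
  end.

Definition add_at (N : nat) (i : 'I_N) (p : 'I_N -> uP) (r : uP) : 'I_N -> uP :=
  fun j => if j == i then uP_add (p j) r else p j.

Definition emb (N : nat) (p : 'I_N -> weak_order A) : 'I_N -> uP :=
  fun j => Some (p j).

Definition has_dictator (N : nat) (w : ('I_N -> uP) -> uP) (i : 'I_N) : Prop :=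
  forall p : 'I_N -> weak_order A,
    (w (emb p) = cbot -> p i = indiff) /\
    (p i <> indiff -> uP_le (w (emb p)) (Some (p i))).

End WeakOrders.

(* By totality, [strict s a b] holds exactly when [s b a] fails, so the
   strictness order on weak orders is plain inclusion of relations.  The join
   [r \/ s] is therefore the transitive closure of [r || s], and [p_i + r = p_i]
   says [r <= p_i]; on the other hand [p_i + c = i], which equals [p_i] iff
   [p_i = i].  These two cases are the two clauses defining a dictator. *)
From Stdlib Require Import ClassicalEpsilon Classical ProofIrrelevance FunctionalExtensionality.
From mathcomp Require Import all_boot.
Set Implicit Arguments. Unset Strict Implicit. Unset Printing Implicit Defensive.

Section StrictnessOrder.
Variable A : finType.
Implicit Types q r s u : weak_order A.

Lemma wo_refl u : reflexive u.
Proof. by move=> a; have := wo_total u a a; rewrite orbb. Qed.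

Lemma strictE u a b : strict u a b = ~~ u b a.
Proof. by rewrite /strict; case: (orP (wo_total u a b)) => ->; rewrite ?andbF. Qed.

Lemma wo_leP r s : wo_le r s <-> subrel r s.
Proof.
split=> [rs a b | rs a b].
  by apply: contraTT; rewrite -!strictE => /rs.
by rewrite !strictE; apply: contra; apply: rs.
Qed.

Lemma wo_le_anti r s : wo_le r s -> wo_le s r -> r = s.
Proof.
move=> /wo_leP rs /wo_leP sr.
have eq_rs : wo_rel r = wo_rel s.
  by do 2!apply: functional_extensionality => ?; apply/idP/idP; [apply: rs | apply: sr].
case: r s eq_rs {rs sr} => [r r_tot r_tr] [s s_tot s_tr] /= eq_rs.
by subst s; f_equal; apply: proof_irrelevance.
Qed.

Lemma wo_le_indiff r : wo_le r (indiff A).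
Proof. by apply/wo_leP. Qed.

Lemma connect_wo u : subrel (connect u) u.
Proof.
move=> a _ /connectP[p u_p ->].
have := mem_last a p; rewrite inE => /predU1P[-> | ]; first exact: wo_refl.
by apply: (allP (order_path_min (@wo_trans _ u) u_p)).
Qed.

Lemma join_closure_total q r : total (connect (relU q r)).
Proof.
move=> a b; apply/orP.
by case: (orP (wo_total q a b)) => qab; [left | right]; apply: connect1; rewrite /= qab.
Qed.

Definition join_closure q r : weak_order A :=
  WeakOrder (@join_closure_total q r) (@connect_trans _ _).

Lemma join_closure_lub q r : is_lub q r (join_closure q r).
Proof.
split; [|split].
- by apply/wo_leP => a b qab; apply: connect1; rewrite /= qab.
- by apply/wo_leP => a b rab; apply: connect1; rewrite /= rab orbT.
- move=> u /wo_leP qu /wo_leP ru; apply/wo_leP => a b ab.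
  by apply/connect_wo/(connect_sub _ ab) => x y /orP[/qu | /ru]; apply: connect1.
Qed.

Lemma wo_join_lub q r : is_lub q r (wo_join q r).
Proof. by apply: epsilon_spec; exists (join_closure q r); apply: join_closure_lub. Qed.

Lemma wo_join_idPl q r : wo_join q r = q <-> wo_le r q.
Proof.
have [q_le [r_le join_min]] := wo_join_lub q r.
split=> [join_q | rq]; first by rewrite -join_q.
by apply: wo_le_anti => //; apply: join_min => //; apply/wo_leP.
Qed.

Lemma uP_add_idPl (x : uP A) r :
  uP_add (Some r) x = Some r <->
  (x = cbot A -> r = indiff A) /\ (r <> indiff A -> uP_le x (Some r)).
Proof.
case: x => [s | ] /=; last by split=> [[<-] | [-> //]].
split=> [[/wo_join_idPl //] | [_ le_sr]]; congr Some; apply/wo_join_idPl.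
by case: (classic (r = indiff A)) => [-> | /le_sr //]; apply: wo_le_indiff.
Qed.

End StrictnessOrder.

Lemma add_at_idP (T : finType) (N : nat) (i : 'I_N) (p : 'I_N -> uP T) (x : uP T) :
  add_at i p x = p <-> uP_add (p i) x = p i.
Proof.
split=> [/(congr1 (fun f => f i)) | p_i]; first by rewrite /add_at eqxx.
by apply: functional_extensionality => j; rewrite /add_at; case: eqP => // ->.
Qed.

Theorem proposition4 (A : finType) (N : nat) (hN : 2 <= N) (i : 'I_N)
    (w : ('I_N -> uP A) -> uP A) :
  has_dictator w i <->
  (forall p : 'I_N -> weak_order A, add_at i (emb p) (w (emb p)) = emb p).
Proof.
split=> [dictator p | fixed p]; first exact/add_at_idP/uP_add_idPl/dictator.
by have /add_at_idP/uP_add_idPl := fixed p.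
Qed.
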